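(* Let $A$ be a ring and $\mathcal C$ a Frobenius-coseparable $A$-coring with cointegral $\delta$ and Frobenius element $e$. Then every right $\mathcal C$-comodule is both formally $\mathbb X^{\mathcal C}_{\delta,e}$-smooth and formally $\mathbb X^{\mathcal C}_{\delta,e}$-cosmooth.
   Context: An $A$-coring $\mathcal C$ has coproduct $\Delta_{\mathcal C}(c)=\sum c_{(1)}\otimes_A c_{(2)}$ and counit $\varepsilon_{\mathcal C}$; right comodules $M$ have coaction $\varrho^M(m)=\sum m_{(0)}\otimes_A m_{(1)}$; $\mathfrak M^{\mathcal C}$ is the category of right $\mathcal C$-comodules, $\mathfrak M_A$ that of right $A$-modules. $\mathcal C$ is coseparable with cointegral $\delta$ if $\delta:\mathcal C\otimes_A\mathcal C\to A$ is an $(A,A)$-bimodule map with $\delta\circ\Delta_{\mathcal C}=\varepsilon_{\mathcal C}$ and $(\mathcal C\otimes_A\delta)\circ(\Delta_{\mathcal C}\otimes_A\mathcal C)=(\delta\otimes_A\mathcal C)\circ(\mathcal C\otimes_A\Delta_{\mathcal C})$. $\mathcal C^A=\{c\in\mathcal C: ac=ca\ \forall a\in A\}$. A coseparable coring with cointegral $\delta$ is Frobenius-coseparable if there is $e\in\mathcal C^A$ (a Frobenius element) with $\delta(c\otimes_A e)=\delta(e\otimes_A c)=\varepsilon_{\mathcal C}(c)$ for all $c\in\mathcal C$. General definitions: an S-category is a pair of functors $u^*:\mathfrak X\to\bar{\mathfrak X}$, $u_*:\bar{\mathfrak X}\to\mathfrak X$ with $u^*\dashv u_*$ and a chosen natural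 left inverse $\nu$ of the unit $\eta$; it is supplemented by a functor $u_!:\bar{\mathfrak X}\to\mathfrak X$ and natural transformation $\bar\eta:\mathrm{Id}\to u^*u_!$; one sets $r_y=\nu_{u_!(y)}\circ u_*(\bar\eta_y):u_*(y)\to u_!(y)$. An object $x\in\mathfrak X$ is formally $\mathbb X$-smooth if $\mathfrak X(x,r_y):g\mapsto r_y\circ g$ is surjective for all $y\in\bar{\mathfrak X}$, and formally $\mathbb X$-cosmooth if $\mathfrak X(r_y,x):g\mapsto g\circ r_y$ is surjective for all $y$. $\mathbb X^{\mathcal C}_{\delta,e}$: $\mathfrak X=\mathfrak M^{\mathcal C}$, $\bar{\mathfrak X}=\mathfrak M_A$, $u^*$ the forgetful functor, $u_*=-\otimes_A\mathcal C$, $\nu_M:M\otimes_A\mathcal C\to M$, $m\otimes_A c\mapsto\sum m_{(0)}\delta(m_{(1)}\otimes_A c)$, $u_!=-\otimes_A\mathcal C$, $\bar\eta_N:N\to N\otimes_A\mathcal C$, $n\mapsto n\otimes_A e$. Thus for $N\in\mathfrak M_A$, $r_N:N\otimes_A\mathcal C\to N\otimes_A\mathcal C$, $n\otimes_A c\mapsto\sum n\otimes_A e_{(1)}\delta(e_{(2)}\otimes_A c)$. *)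

From HB Require Import structures.
From mathcomp Require Import all_boot all_order all_algebra.
From Stdlib Require Import ClassicalEpsilon.
Set Implicit Arguments. Unset Strict Implicit. Unset Printing Implicit Defensive.
Import GRing.Theory.
Local Open Scope ring_scope.

Record rdata (A : pzRingType) := RData {
  rcar :> Type;
  radd : rcar -> rcar -> rcar;
  rzero : rcar;
  ropp : rcar -> rcar;
  ract : rcar -> A -> rcar }.
Arguments RData {A}.
Arguments radd {A M} : rename.
Arguments rzero {A} M : rename.
Arguments ropp {A M} : rename.
Arguments ract {A M} : rename.

Record bdata (A : pzRingType) := BData {
  bcar :> Type;
  badd : bcar -> bcar -> bcar;
  bzero : bcar;
  bopp : bcar -> bcar;
  blact : A -> bcar -> bcar;
  bract : bcar -> A -> bcar }.
Arguments BData {A}.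
Arguments badd {A C} : rename.
Arguments bzero {A} C : rename.
Arguments bopp {A C} : rename.
Arguments blact {A C} : rename.
Arguments bract {A C} : rename.

Definition bd_rd (A : pzRingType) (C : bdata A) : rdata A :=
  RData (bcar C) badd (bzero C) bopp bract.

Definition is_rmod (A : pzRingType) (M : rdata A) : Prop :=
  [/\ (forall x y z : M, radd x (radd y z) = radd (radd x y) z),
      (forall x y : M, radd x y = radd y x),
      (forall x : M, radd (rzero M) x = x),
      (forall x : M, radd (ropp x) x = rzero M) &
      [/\ (forall (x : M) (a b : A), ract x (a + b) = radd (ract x a) (ract x b)),
          (forall (x y : M) (a : A), ract (radd x y) a = radd (ract x a) (ract y a)),
          (forall (x : M) (a b : A), ract x (a * b) = ract (ract x a) b) &
          (forall x : M, ract x 1 = x)]].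

Definition is_bimod (A : pzRingType) (C : bdata A) : Prop :=
  is_rmod (bd_rd C) /\
  [/\ (forall (x : C) (a b : A), blact (a + b) x = badd (blact a x) (blact b x)),
      (forall (x y : C) (a : A), blact a (badd x y) = badd (blact a x) (blact a y)),
      (forall (x : C) (a b : A), blact (a * b) x = blact a (blact b x)),
      (forall x : C, blact 1 x = x) &
      (forall (x : C) (a b : A), blact a (bract x b) = bract (blact a x) b)].

(* Formal sums (lists of pairs) modulo the congruence generated by
   biadditivity, A-balancedness and 0 (x) n = 0. *)
Inductive teq (A : pzRingType) (M : rdata A) (N : bdata A) :
    seq (M * N) -> seq (M * N) -> Prop :=
| teq_refl s : teq s s
| teq_sym s t : teq s t -> teq t s
| teq_trans s t u : teq s t -> teq t u -> teq s u
| teq_cat s s' t t' : teq s s' -> teq t t' -> teq (s ++ t) (s' ++ t')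
| teq_comm s t : teq (s ++ t) (t ++ s)
| teq_addl (m m' : M) (n : N) : teq [:: (radd m m', n)] [:: (m, n); (m', n)]
| teq_addr (m : M) (n n' : N) : teq [:: (m, badd n n')] [:: (m, n); (m, n')]
| teq_zero (n : N) : teq [:: (rzero M, n)] [::]
| teq_bal (m : M) (a : A) (n : N) : teq [:: (ract m a, n)] [:: (m, blact a n)].

Definition tcar (A : pzRingType) (M : rdata A) (N : bdata A) : Type :=
  {P : seq (M * N) -> Prop | exists s, P = teq s}.

Definition tcl (A : pzRingType) (M : rdata A) (N : bdata A) (s : seq (M * N))
  : tcar M N := exist _ (teq s) (ex_intro _ s erefl).

Definition trep (A : pzRingType) (M : rdata A) (N : bdata A) (x : tcar M N)
  : seq (M * N) := proj1_sig (constructive_indefinite_description _ (proj2_sig x)).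

Section TensorOps.
Variables (A : pzRingType) (M : rdata A) (N : bdata A).
Definition tadd (x y : tcar M N) : tcar M N := tcl (trep x ++ trep y).
Definition tzero : tcar M N := tcl [::].
Definition topp (x : tcar M N) : tcar M N :=
  tcl (map (fun p => (ropp p.1, p.2)) (trep x)).
Definition tact (x : tcar M N) (a : A) : tcar M N :=
  tcl (map (fun p => (p.1, bract p.2 a)) (trep x)).
Definition tmul (m : M) (n : N) : tcar M N := tcl [:: (m, n)].
Definition tfold (G : Type) (gadd : G -> G -> G) (g0 : G) (phi : M -> N -> G)
  (x : tcar M N) : G := foldr (fun p acc => gadd (phi p.1 p.2) acc) g0 (trep x).
End TensorOps.

Definition tens (A : pzRingType) (M : rdata A) (N : bdata A) : rdata A :=
  RData (tcar M N) (@tadd A M N) (tzero M N) (@topp A M N) (@tact A M N).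

Definition tlact (A : pzRingType) (C D : bdata A) (a : A) (x : tcar (bd_rd C) D)
  : tcar (bd_rd C) D :=
  @tcl A (bd_rd C) D (map (fun p : bd_rd C * D => (blact a p.1, p.2)) (trep x)).

Definition tensB (A : pzRingType) (C D : bdata A) : bdata A :=
  BData (tcar (bd_rd C) D) (@tadd A (bd_rd C) D) (tzero (bd_rd C) D)
        (@topp A (bd_rd C) D) (@tlact A C D) (@tact A (bd_rd C) D).

Definition tmapl (A : pzRingType) (M M' : rdata A) (N : bdata A) (f : M -> M')
  (x : tcar M N) : tcar M' N := @tcl A M' N (map (fun p : M * N => (f p.1, p.2)) (trep x)).
Definition tmapr (A : pzRingType) (M : rdata A) (N N' : bdata A) (g : N -> N')
  (x : tcar M N) : tcar M N' := @tcl A M N' (map (fun p : M * N => (p.1, g p.2)) (trep x)).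

Definition tassoc (A : pzRingType) (M : rdata A) (N P : bdata A)
  (x : tcar (tens M N) P) : tcar M (tensB N P) :=
  tfold (@tadd A M (tensB N P)) (tzero M (tensB N P))
    (fun (y : tens M N) (p : P) =>
       tfold (@tadd A M (tensB N P)) (tzero M (tensB N P))
         (fun (m : M) (n : N) => @tmul A M (tensB N P) m (@tmul A (bd_rd N) P n p)) y)
    x.

Section Coring.
Variables (A : pzRingType) (C : bdata A).
Variables (Delta : C -> tensB C C) (eps : C -> A).

Definition is_coring : Prop :=
  [/\ is_bimod C,
      [/\ (forall c d : C, Delta (badd c d) = tadd (Delta c) (Delta d)),
          (forall (a : A) (c : C), Delta (blact a c) = tlact a (Delta c)) &
          (forall (c : C) (a : A), Delta (bract c a) = tact (Delta c) a)],
      [/\ (forall c d : C, eps (badd c d) = eps c + eps d),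
          (forall (a : A) (c : C), eps (blact a c) = a * eps c) &
          (forall (c : C) (a : A), eps (bract c a) = eps c * a)],
      (forall c : C,
         tassoc (@tmapl A (bd_rd C) (tens (bd_rd C) C) C Delta (Delta c))
         = @tmapr A (bd_rd C) C (tensB C C) Delta (Delta c)) &
      (forall c : C,
         @tfold A (bd_rd C) C C badd (bzero C) (fun c1 c2 : C => blact (eps c1) c2) (Delta c) = c
         /\ @tfold A (bd_rd C) C C badd (bzero C) (fun c1 c2 : C => bract c1 (eps c2)) (Delta c) = c)].

Definition is_comodule (M : rdata A) (rho : M -> tens M C) : Prop :=
  [/\ is_rmod M,
      (forall x y : M, rho (radd x y) = tadd (rho x) (rho y)),
      (forall (x : M) (a : A), rho (ract x a) = tact (rho x) a),
      (forall m : M,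
         tassoc (@tmapl A M (tens M C) C rho (rho m))
         = @tmapr A M C (tensB C C) Delta (rho m)) &
      (forall m : M, tfold radd (rzero M) (fun (m0 : M) (m1 : C) => ract m0 (eps m1)) (rho m) = m)].

Definition comod_morph (M M' : rdata A) (rho : M -> tens M C) (rho' : M' -> tens M' C)
  (f : M -> M') : Prop :=
  [/\ (forall x y : M, f (radd x y) = radd (f x) (f y)),
      (forall (x : M) (a : A), f (ract x a) = ract (f x) a) &
      (forall m : M, rho' (f m) = @tmapl A M M' C f (rho m))].

Definition is_cointegral (delta : tensB C C -> A) : Prop :=
  [/\ (forall x y : tensB C C, delta (tadd x y) = delta x + delta y),
      (forall (a : A) (x : tensB C C), delta (tlact a x) = a * delta x),
      (forall (x : tensB C C) (a : A), delta (tact x a) = delta x * a),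
      (forall c : C, delta (Delta c) = eps c) &
      (* (C (x) delta)(Delta (x) C) = (delta (x) C)(C (x) Delta), on c (x) d *)
      (forall c d : C,
         @tfold A (bd_rd C) C C badd (bzero C)
           (fun c1 c2 : C => bract c1 (delta (@tmul A (bd_rd C) C c2 d))) (Delta c)
         = @tfold A (bd_rd C) C C badd (bzero C)
           (fun d1 d2 : C => blact (delta (@tmul A (bd_rd C) C c d1)) d2) (Delta d))].

Definition is_coseparable : Prop :=
  is_coring /\ exists delta, is_cointegral delta.

Definition is_frobenius_element (delta : tensB C C -> A) (e : C) : Prop :=
  (forall a : A, blact a e = bract e a) /\
  (forall c : C, delta (@tmul A (bd_rd C) C c e) = eps c
                 /\ delta (@tmul A (bd_rd C) C e c) = eps c).

(* u_*(N) = N (x)_A C with coaction n (x) c |-> (n (x) c_(1)) (x) c_(2) *)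
Definition free_coact (N : rdata A) (x : tens N C) : tens (tens N C) C :=
  tfold (@tadd A (tens N C) C) (tzero (tens N C) C)
    (fun (n : N) (c : C) =>
       @tfold A (bd_rd C) C _ (@tadd A (tens N C) C) (tzero (tens N C) C)
         (fun c1 c2 : C => @tmul A (tens N C) C (@tmul A N C n c1) c2) (Delta c))
    x.

(* r_N : N (x) C -> N (x) C,  n (x) c |-> n (x) e_(1) delta(e_(2) (x) c) *)
Definition rmap (delta : tensB C C -> A) (e : C) (N : rdata A) (x : tens N C)
  : tens N C :=
  tfold (@tadd A N C) (tzero N C)
    (fun (n : N) (c : C) =>
       @tfold A (bd_rd C) C _ (@tadd A N C) (tzero N C)
         (fun e1 e2 : C => @tmul A N C n (bract e1 (delta (@tmul A (bd_rd C) C e2 c))))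
         (Delta e))
    x.

Definition formally_smooth (delta : tensB C C -> A) (e : C)
  (M : rdata A) (rho : M -> tens M C) : Prop :=
  forall (N : rdata A), is_rmod N ->
  forall h : M -> tens N C, comod_morph rho (@free_coact N) h ->
  exists g : M -> tens N C,
    comod_morph rho (@free_coact N) g /\ (forall m, rmap delta e (g m) = h m).

Definition formally_cosmooth (delta : tensB C C -> A) (e : C)
  (M : rdata A) (rho : M -> tens M C) : Prop :=
  forall (N : rdata A), is_rmod N ->
  forall h : tens N C -> M, comod_morph (@free_coact N) rho h ->
  exists g : tens N C -> M,
    comod_morph (@free_coact N) rho g /\ (forall x, g (rmap delta e x) = h x).
End Coring.

(* The key observation is that the map r_N : N (x)_A C -> N (x)_A C,
   n (x) c |-> n (x) e_(1) delta(e_(2) (x) c), is the identity.  Indeed, the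
   cointegral identity (C (x) delta)(Delta (x) C) = (delta (x) C)(C (x) Delta)
   applied to e (x) c gives  e_(1) delta(e_(2) (x) c) = delta(e (x) c_(1)) c_(2),
   the Frobenius property turns this into eps(c_(1)) c_(2), and the counit law
   makes it c.  Once r_N = id, every comodule morphism h is its own lift along
   r_N, which is exactly formal smoothness and cosmoothness. *)
From mathcomp Require Import all_boot all_order all_algebra.
From Stdlib Require Import ClassicalEpsilon FunctionalExtensionality PropExtensionality ProofIrrelevance.
Set Implicit Arguments. Unset Strict Implicit. Unset Printing Implicit Defensive.
Import GRing.Theory.
Local Open Scope ring_scope.

Section TensorClasses.
Variables (A : pzRingType) (M : rdata A) (N : bdata A).

Lemma tcl_teq (s t : seq (M * N)) : teq s t -> tcl s = tcl t.
Proof.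
move=> st.
have classes_eq : teq s = teq t.
  apply: functional_extensionality => u; apply: propositional_extensionality.
  by split=> [su | tu]; [apply: teq_trans (teq_sym st) su | apply: teq_trans st tu].
rewrite /tcl; apply: eq_sig_hprop => // P p q; exact: proof_irrelevance.
Qed.

Lemma tcl_trep (x : tcar M N) : tcl (trep x) = x.
Proof.
case: x => P HP; rewrite /trep /=.
case: (constructive_indefinite_description _ HP) => s Hs /=.
subst P; rewrite /tcl; congr exist; exact: proof_irrelevance.
Qed.

Lemma trep_tcl (s : seq (M * N)) : teq (trep (tcl s)) s.
Proof.
rewrite /trep; case: (constructive_indefinite_description _ _) => t /= Ht.
by apply: teq_sym; rewrite Ht; exact: teq_refl.
Qed.

Lemma tadd_tcl (s t : seq (M * N)) : tadd (tcl s) (tcl t) = tcl (s ++ t).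
Proof. by apply: tcl_teq; apply: teq_cat; exact: trep_tcl. Qed.

Lemma sum_tmul (s : seq (M * N)) :
  foldr (fun p acc => tadd (tmul p.1 p.2) acc) (tzero M N) s = tcl s.
Proof. by elim: s => [//|[m n] s IH] /=; rewrite IH /tmul tadd_tcl. Qed.

Lemma tfold_tmul (x : tcar M N) : tfold (@tadd A M N) (tzero M N) (@tmul A M N) x = x.
Proof. by rewrite /tfold sum_tmul tcl_trep. Qed.

Lemma eq_tfold (G : Type) (gadd : G -> G -> G) (g0 : G) (phi psi : M -> N -> G)
  (x : tcar M N) :
  (forall m n, phi m n = psi m n) -> tfold gadd g0 phi x = tfold gadd g0 psi x.
Proof. by move=> phi_psi; rewrite /tfold; elim: (trep x) => //= p s ->; rewrite phi_psi. Qed.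
End TensorClasses.

Lemma idempotent_zero (T : Type) (add : T -> T -> T) (z : T) (opp : T -> T) (x : T) :
  (forall x y w, add x (add y w) = add (add x y) w) ->
  (forall x, add z x = x) -> (forall x, add (opp x) x = z) ->
  x = add x x -> x = z.
Proof.
move=> addA add0 addNx xx.
have : add (opp x) x = add (opp x) (add x x) by rewrite -xx.
by rewrite addA addNx add0 => <-.
Qed.

(* n (x) 0 = 0: write 0 = 0 . 0 and move the scalar 0 across the tensor sign. *)
Lemma teq_zero_right (A : pzRingType) (N : rdata A) (C : bdata A) (n : N) :
  is_rmod N -> is_bimod C -> teq [:: (n, bzero C)] [::].
Proof.
move=> [Na _ N0 Ni [NactD _ _ _]] [[Ca _ C0 Ci _] [ClactD _ _ _ _]].
have lact0 : blact 0 (bzero C) = bzero C.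
  by apply: (idempotent_zero (add := badd) (opp := bopp)) => //; rewrite -ClactD addr0.
have ract0 : ract n 0 = rzero N.
  by apply: (idempotent_zero (add := radd) (opp := ropp)) => //; rewrite -NactD addr0.
rewrite -{1}lact0; apply: teq_trans (teq_sym (teq_bal n 0 (bzero C))) _.
by rewrite ract0; exact: teq_zero.
Qed.

Lemma sum_tmul_right (A : pzRingType) (N : rdata A) (C : bdata A) (n : N)
  (X : Type) (g : X -> C) (s : seq X) :
  is_rmod N -> is_bimod C ->
  foldr (fun p acc => tadd (@tmul A N C n (g p)) acc) (tzero N C) s
  = tmul n (foldr (fun p acc => badd (g p) acc) (bzero C) s).
Proof.
move=> hN hC; elim: s => [|p s IH] /=.
  by apply: tcl_teq; apply: teq_sym; exact: teq_zero_right.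
by rewrite IH /tmul tadd_tcl; apply: tcl_teq; apply: teq_sym; exact: teq_addr.
Qed.

Section FrobeniusCoring.
Variables (A : pzRingType) (C : bdata A).
Variables (Delta : C -> tensB C C) (eps : C -> A) (delta : tensB C C -> A) (e : C).
Hypothesis coringC : is_coring Delta eps.
Hypothesis cointegral_delta : is_cointegral Delta eps delta.
Hypothesis frobenius_e : is_frobenius_element eps delta e.

Lemma frobenius_split (c : C) :
  @tfold A (bd_rd C) C C badd (bzero C)
    (fun e1 e2 : C => bract e1 (delta (@tmul A (bd_rd C) C e2 c))) (Delta e) = c.
Proof.
case: coringC => _ _ _ _ counit; case: cointegral_delta => _ _ _ _ delta_balanced.
case: frobenius_e => _ frob.
rewrite delta_balanced (eq_tfold _ _ (psi := fun (d1 : bd_rd C) (d2 : C) => blact (eps d1) d2)).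
  by case: (counit c).
by move=> d1 d2; case: (frob d1) => _ ->.
Qed.

Lemma rmap_id (N : rdata A) : is_rmod N -> forall x : tens N C, rmap Delta delta e x = x.
Proof.
move=> hN x; case: (coringC) => hC _ _ _ _.
rewrite /rmap -[RHS]tfold_tmul; apply: eq_tfold => n c.
by rewrite /tfold sum_tmul_right // -[in RHS](frobenius_split c).
Qed.
End FrobeniusCoring.

Theorem corollary4p8 (A : pzRingType) (C : bdata A)
  (Delta : C -> tensB C C) (eps : C -> A) (delta : tensB C C -> A) (e : C) :
  is_coring Delta eps ->
  is_cointegral Delta eps delta ->
  is_frobenius_element eps delta e ->
  forall (M : rdata A) (rho : M -> tens M C),
    is_comodule Delta eps rho ->
    formally_smooth Delta delta e rho /\ formally_cosmooth Delta delta e rho.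
Proof.
move=> coringC cointegral_delta frobenius_e M rho _.
have r_id := rmap_id coringC cointegral_delta frobenius_e.
split=> N hN h h_morph; exists h; split=> // x; by rewrite r_id.
Qed.
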